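(* Let $c<\frac16$. In the containment game on $\mathbb{Z}^2_{8}$ with Container strength $q=1$ (so Container deletes at most one vertex per turn) and spreading function $g(t)=c\sqrt{t}$, Container wins for every finite initial occupied set $\mathcal{B}_0$. Moreover, Container has a winning strategy which deletes exactly the vertices of a single row $\{(x,H): 0\le x\le H\}$ of $\mathbb{Z}^2_{8}$, where the height $H$ depends only on the initial occupied set $\mathcal{B}_0$.
   Context: $\mathbb{Z}^2_{8}$ (the ''eighth plane'') is the graph with vertex set $\{(x,y)\in\mathbb{Z}^2: 0\le x\le y\}$ and edge set $\{((x,y),(x+i,y+1)) : 0\le x\le y,\ i\in\{0,1\}\}$. The containment game $(G,q,g)$, for real $q>0$ and a spreading function $g$, is a full-information game between Container and Spreader on an infinite graph $G$, starting from a finite set $\mathcal{B}_0$ of occupied vertices. At turn $t=1,2,\dots$, first Container deletes at most $\lfloor tq\rfloor-\lfloor (t-1)q\rfloor$ non-occupied vertices from the current graph; then Spreader chooses $g(t)$ vertices of the remaining graph at distance at most one from $\mathcal{B}_{t-1}$ and adds them to form $\mathcal{B}_t$. Container wins if after some time no new vertices become occupied; otherwise Spreader wins. *)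

From Stdlib Require Import Reals List Arith Lia.
Open Scope R_scope.

(* Vertices of Z^2_8: pairs (x,y) of naturals with x <= y. *)
Definition V : Type := (nat * nat)%type.

Definition vert (v : V) : Prop := (fst v <= snd v)%nat.

Definition edge8 (u v : V) : Prop :=
  vert u /\ snd v = S (snd u) /\ (fst v = fst u \/ fst v = S (fst u)).

Definition adj (u v : V) : Prop := edge8 u v \/ edge8 v u.

Definition row (H : nat) (v : V) : Prop := snd v = H /\ (fst v <= H)%nat.

(* A Container strategy: at turn t it sees the full history
   [B_0; ...; B_{t-1}] of occupied sets and deletes at most one vertex
   (q = 1, so floor(t q) - floor((t-1) q) = 1). *)
Definition cstrategy : Type := nat -> list (V -> Prop) -> option V.

Definition hist (B : nat -> V -> Prop) (t : nat) : list (V -> Prop) :=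
  map B (seq 0 t).

Definition deleted (sigma : cstrategy) (B : nat -> V -> Prop) (t : nat) (v : V) : Prop :=
  exists s, (1 <= s <= t)%nat /\ sigma s (hist B s) = Some v.

(* B is a legal sequence of occupied sets in the game (Z^2_8, 1, c sqrt t)
   starting from the finite set B0, against Container strategy sigma:
   at turn t (after Container's deletion), Spreader picks at most
   c*sqrt(t) vertices of the remaining graph at distance <= 1 from B_{t-1}. *)
Definition legal_play (c : R) (B0 : list V) (sigma : cstrategy)
    (B : nat -> V -> Prop) : Prop :=
  (forall v, B 0%nat v <-> In v B0) /\
  forall t : nat, (1 <= t)%nat ->
    exists S : list V,
      INR (length S) <= c * sqrt (INR t) /\
      (forall v, B t v <-> (B (t - 1)%nat v \/ In v S)) /\
      (forall v, In v S ->
         vert v /\ ~ deleted sigma B t v /\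
         (B (t - 1)%nat v \/ exists u, B (t - 1)%nat u /\ adj u v)).

From Stdlib Require Import Reals List Arith Lia Psatz Wf_nat Classical ClassicalEpsilon.
Import ListNotations.
Local Open Scope nat_scope.

(* Let h0 bound the heights of B0, n = 3 h0 + 3, g = 4 n and H = g n.  During the first
   H - n turns Container deletes the vertices of row H whose column is not a multiple of g;
   afterwards it deletes the undeleted vertex of row H closest to the occupied set.
   Spreader adds at most c sqrt t < n / 3 vertices per turn up to time H.  This makes the
   following Hall-type condition hold at time H - n: for every k, at most k undeleted
   vertices of row H lie within distance k of the occupied set.  For k > n this is because
   only the n + 1 multiples of g are left.  For k <= n such a column exists only if
   k >= n - h0, and each of them forces h0 + 2 vertices created during the last 2 h0 + 2
   turns in a strip of width 4 n around it; the strips are disjoint and only (2 h0 + 2) h0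
   vertices were created in that period, so there are at most 2 h0 such columns.  One turn
   lowers every distance by at most one, so deleting a closest vertex preserves the
   condition, whose case k = 0 says that row H is never occupied.  The occupied set
   therefore stays in the finite region below row H and becomes stationary. *)

Section Counting.
Context {A : Type}.

Definition holds (P : A -> Prop) (x : A) : bool :=
  if excluded_middle_informative (P x) then true else false.

Lemma holds_true P x : holds P x = true <-> P x.
Proof. unfold holds; destruct (excluded_middle_informative (P x)); intuition congruence. Qed.

Definition count_sat (P : A -> Prop) (l : list A) : nat := length (filter (holds P) l).

Lemma In_filter_holds P l x : In x (filter (holds P) l) <-> In x l /\ P x.
Proof. rewrite filter_In, holds_true; reflexivity. Qed.

Lemma count_sat_cons P a l :
  count_sat P (a :: l) = (if excluded_middle_informative (P a) then 1 else 0) + count_sat P l.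
Proof.
  unfold count_sat, holds; simpl; destruct (excluded_middle_informative (P a)); reflexivity.
Qed.

Lemma count_sat_le_length P l : count_sat P l <= length l.
Proof.
  induction l as [|a l IH]; [reflexivity|].
  rewrite count_sat_cons; simpl; destruct (excluded_middle_informative (P a)); lia.
Qed.

Lemma count_sat_le_mono P Q l :
  (forall x, In x l -> P x -> Q x) -> count_sat P l <= count_sat Q l.
Proof.
  induction l as [|a l IH]; intros PQ; [reflexivity|].
  rewrite !count_sat_cons.
  specialize (IH (fun x Hx => PQ x (or_intror Hx))).
  destruct (excluded_middle_informative (P a)) as [Pa|];
    destruct (excluded_middle_informative (Q a)) as [|nQa]; try lia.
  exfalso; exact (nQa (PQ a (or_introl eq_refl) Pa)).
Qed.

Lemma count_sat_lt_mono P Q l y :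
  (forall x, In x l -> P x -> Q x) -> In y l -> Q y -> ~ P y ->
  count_sat P l < count_sat Q l.
Proof.
  induction l as [|a l IH]; intros PQ Hy Qy nPy; [destruct Hy|].
  rewrite !count_sat_cons.
  assert (PQl : forall x, In x l -> P x -> Q x) by (intros x Hx; apply PQ; right; exact Hx).
  destruct Hy as [<-|Hy].
  - assert (le := count_sat_le_mono P Q l PQl).
    destruct (excluded_middle_informative (P a)); [contradiction|].
    destruct (excluded_middle_informative (Q a)); [lia|contradiction].
  - specialize (IH PQl Hy Qy nPy).
    destruct (excluded_middle_informative (P a)) as [Pa|];
      destruct (excluded_middle_informative (Q a)) as [|nQa]; try lia.
    exfalso; exact (nQa (PQ a (or_introl eq_refl) Pa)).
Qed.

Lemma count_sat_pos P l x : In x l -> P x -> 0 < count_sat P l.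
Proof.
  intros Hx Px. apply (Nat.le_lt_trans _ (count_sat (fun _ => False) l)); [lia|].
  apply (count_sat_lt_mono _ _ _ x); tauto.
Qed.

Lemma count_sat_pos_witness P l : 0 < count_sat P l -> exists x, In x l /\ P x.
Proof.
  induction l as [|a l IH]; [cbn; lia|].
  rewrite count_sat_cons. destruct (excluded_middle_informative (P a)) as [Pa|nPa].
  - intros _; exists a; split; [left|]; auto.
  - intros pos; destruct (IH pos) as [x [Hx Px]]; exists x; split; [right|]; auto.
Qed.

Lemma count_sat_le_incl P l m :
  NoDup l -> (forall x, In x l -> P x -> In x m) -> count_sat P l <= length m.
Proof.
  intros ndl lm. apply NoDup_incl_length; [apply NoDup_filter, ndl|].
  intros x Hx; apply In_filter_holds in Hx as [Hx Px]; auto.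
Qed.

End Counting.

Lemma NoDup_flat_map {A B} (f : A -> list B) (l : list A) :
  NoDup l -> (forall x, In x l -> NoDup (f x)) ->
  (forall x y w, In x l -> In y l -> x <> y -> In w (f x) -> ~ In w (f y)) ->
  NoDup (flat_map f l).
Proof.
  induction l as [|a l IH]; intros ndl ndf disj; [constructor|].
  inversion ndl as [|? ? anl ndl']; subst; simpl. apply NoDup_app.
  - apply ndf; left; reflexivity.
  - apply IH; [exact ndl'| intros x Hx; apply ndf; right; exact Hx|].
    intros x y w Hx Hy; apply disj; right; assumption.
  - intros w Hwa Hw. apply in_flat_map in Hw as [y [Hy Hwy]].
    apply (disj a y w); [left; reflexivity|right; exact Hy| |exact Hwa|exact Hwy].
    intros ->; contradiction.
Qed.

Lemma length_flat_map_ge {A B} (f : A -> list B) (l : list A) m :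
  (forall x, In x l -> m <= length (f x)) -> length l * m <= length (flat_map f l).
Proof.
  induction l as [|a l IH]; intros Hf; simpl; [lia|].
  rewrite length_app. specialize (Hf a (or_introl eq_refl)) as Ha.
  specialize (IH (fun x Hx => Hf x (or_intror Hx))). lia.
Qed.

Lemma length_flat_map_le {A B} (f : A -> list B) (l : list A) b :
  (forall x, In x l -> length (f x) <= b) -> length (flat_map f l) <= length l * b.
Proof.
  induction l as [|a l IH]; intros Hf; simpl; [lia|].
  rewrite length_app. specialize (Hf a (or_introl eq_refl)) as Ha.
  specialize (IH (fun x Hx => Hf x (or_intror Hx))). lia.
Qed.

Lemma nondecreasing_bounded_stationary (f : nat -> nat) M :
  (forall t, f t <= f (S t)) -> (forall t, f t <= M) ->
  exists T, forall t, T <= t -> f t = f T.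
Proof.
  intros step bound.
  assert (mono : forall s t, s <= t -> f s <= f t)
    by (intros s t; induction 1; [lia|specialize (step m); lia]).
  destruct (dec_inh_nat_subset_has_unique_least_element (fun m => exists T, M <= f T + m)
    (fun m => classic _) (ex_intro _ M (ex_intro _ 0 (Nat.le_add_l M (f 0)))))
    as [m [[[T HT] least] _]].
  exists T; intros t Ht. specialize (mono _ _ Ht). specialize (bound t).
  destruct (Nat.eq_dec (f t) (f T)) as [eq|ne]; [exact eq|].
  assert (m <= m - 1) by (apply least; exists t; lia). lia.
Qed.

Lemma multiples_apart g x y :
  x mod g = 0 -> y mod g = 0 -> x <> y -> x + g <= y \/ y + g <= x.
Proof.
  intros Hx Hy Hxy.
  assert (Ex := Nat.div_mod_eq x g). assert (Ey := Nat.div_mod_eq y g).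
  rewrite Hx in Ex; rewrite Hy in Ey.
  destruct (lt_eq_lt_dec (x / g) (y / g)) as [[lt|eq]|lt]; nia.
Qed.

Lemma adj_close u v : adj u v ->
  fst v <= fst u + 1 /\ fst u <= fst v + 1 /\ snd v <= snd u + 1 /\ snd u <= snd v + 1.
Proof. destruct u, v; unfold adj, edge8, vert; simpl; lia. Qed.

(* A lower bound for the graph distance from [u] to [(x, H)] along paths that stay
   weakly below row [H]: it vanishes at [(x, H)] and is 1-Lipschitz along edges. *)
Definition row_dist (H : nat) (u : V) (x : nat) : nat :=
  (H - snd u) + 2 * Nat.max (fst u - x) (x - (fst u + (H - snd u))).

Lemma row_dist_adj H u v x :
  adj u v -> snd u <= H -> snd v <= H -> row_dist H u x <= row_dist H v x + 1.
Proof. destruct u, v; unfold adj, edge8, vert, row_dist; simpl; lia. Qed.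

Lemma row_dist_ge_depth H u x : H - snd u <= row_dist H u x.
Proof. unfold row_dist; lia. Qed.

Lemma row_dist_column H u x k : row_dist H u x <= k -> x <= fst u + k /\ fst u <= x + k.
Proof. unfold row_dist; lia. Qed.

Definition grid_below (H : nat) : list V :=
  flat_map (fun y => map (fun x => (x, y)) (seq 0 (S y))) (seq 0 H).

Lemma In_grid_below H v : vert v -> snd v < H -> In v (grid_below H).
Proof.
  destruct v as [x y]; unfold vert; simpl; intros xy yH. apply in_flat_map.
  exists y; split; [apply in_seq; lia|]. apply in_map_iff; exists x; split; [reflexivity|].
  apply in_seq; lia.
Qed.

Definition near_row (H : nat) (Bt : V -> Prop) (k x : nat) : Prop :=
  exists u, Bt u /\ snd u <= H /\ row_dist H u x <= k.

Definition open_near (H : nat) (Bt : V -> Prop) (dels : list nat) (k x : nat) : Prop :=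
  x <= H /\ ~ In x dels /\ near_row H Bt k x.

Lemma open_near_mono H Bt dels k k' x :
  k <= k' -> open_near H Bt dels k x -> open_near H Bt dels k' x.
Proof.
  intros le [xH [nd [u [Bu [uH d]]]]]; repeat split; auto.
  exists u; repeat split; auto; lia.
Qed.

Definition greedy_column (H : nat) (Bt : V -> Prop) (dels : list nat) : option nat :=
  if excluded_middle_informative (exists k x, open_near H Bt dels k x)
  then Some (epsilon (inhabits 0) (fun x => exists k, open_near H Bt dels k x /\
                        forall k' x', open_near H Bt dels k' x' -> k <= k'))
  else None.

Lemma greedy_column_spec H Bt dels k x : open_near H Bt dels k x ->
  exists x0, greedy_column H Bt dels = Some x0 /\
    exists k0, open_near H Bt dels k0 x0 /\ forall k' x', open_near H Bt dels k' x' -> k0 <= k'.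
Proof.
  intros open.
  destruct (dec_inh_nat_subset_has_unique_least_element
              (fun k => exists x, open_near H Bt dels k x) (fun _ => classic _)
              (ex_intro _ k (ex_intro _ x open))) as [k0 [[[x1 open1] least] _]].
  unfold greedy_column. destruct (excluded_middle_informative _) as [_|none];
    [|exfalso; apply none; eauto].
  eexists; split; [reflexivity|]. apply epsilon_spec.
  exists x1, k0; split; [exact open1|]. intros k' x' open'; apply least; eauto.
Qed.

Lemma greedy_column_min H Bt dels k x : open_near H Bt dels k x ->
  exists x0, greedy_column H Bt dels = Some x0 /\ open_near H Bt dels k x0.
Proof.
  intros open. destruct (greedy_column_spec _ _ _ _ _ open) as [x0 [E [k0 [open0 least]]]].
  exists x0; split; [exact E|]. apply (open_near_mono _ _ _ k0); [apply (least k x)|]; assumption.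
Qed.

Lemma greedy_column_le H Bt dels x0 : greedy_column H Bt dels = Some x0 -> x0 <= H.
Proof.
  intros E. unfold greedy_column in E.
  destruct (excluded_middle_informative _) as [[k [x open]]|]; [|discriminate].
  destruct (greedy_column_spec _ _ _ _ _ open) as [x1 [E1 [k1 [[le _] _]]]].
  unfold greedy_column in E1. destruct (excluded_middle_informative _); [|discriminate].
  congruence.
Qed.

(* The [i]-th positive integer not divisible by [g], counting from [i = 0]. *)
Definition nonmultiple (g i : nat) : nat := i / (g - 1) * g + i mod (g - 1) + 1.

Lemma nonmultiple_lt g n i : 1 < g -> i < (g - 1) * n -> nonmultiple g i < g * n.
Proof.
  intros g_gt i_lt. unfold nonmultiple.
  assert (E := Nat.div_mod_eq i (g - 1)).
  assert (R := Nat.mod_upper_bound i (g - 1) ltac:(lia)).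
  assert (i / (g - 1) < n) by (apply Nat.Div0.div_lt_upper_bound; lia).
  nia.
Qed.

Lemma nonmultiple_onto g x : 1 < g -> x mod g <> 0 ->
  nonmultiple g ((g - 1) * (x / g) + (x mod g - 1)) = x.
Proof.
  intros g_gt x_mod. unfold nonmultiple.
  assert (E := Nat.div_mod_eq x g). assert (R := Nat.mod_upper_bound x g ltac:(lia)).
  set (i := (g - 1) * (x / g) + (x mod g - 1)).
  rewrite <- (Nat.div_unique i (g - 1) (x / g) (x mod g - 1)) by lia.
  rewrite <- (Nat.mod_unique i (g - 1) (x / g) (x mod g - 1)) by lia.
  nia.
Qed.

Section RowStrategy.
Variables (H g t1 : nat).

Definition choose_column (Bs : nat -> V -> Prop) (t : nat) (dels : list nat) : option nat :=
  if t <=? t1 then Some (nonmultiple g (t - 1)) else greedy_column H (Bs (t - 1)) dels.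

Fixpoint deleted_columns (Bs : nat -> V -> Prop) (t : nat) : list nat :=
  match t with
  | 0 => []
  | S t' => let dels := deleted_columns Bs t' in
            match choose_column Bs t dels with Some x => x :: dels | None => dels end
  end.

Definition of_history (l : list (V -> Prop)) (i : nat) : V -> Prop := nth i l (fun _ => False).

Definition row_strategy : cstrategy := fun t l =>
  match t with
  | 0 => None
  | S t' => option_map (fun x => (x, H))
              (choose_column (of_history l) t (deleted_columns (of_history l) t'))
  end.

Lemma deleted_columns_ext Bs Bs' t :
  (forall i, i < t -> Bs i = Bs' i) -> deleted_columns Bs t = deleted_columns Bs' t.
Proof.
  induction t as [|t IH]; intros agree; [reflexivity|]. simpl.
  rewrite IH by (intros i Hi; apply agree; lia).
  unfold choose_column. rewrite (agree (S t - 1)) by lia. reflexivity.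
Qed.

Lemma of_history_hist B t i : i < t -> of_history (hist B t) i = B i.
Proof.
  intros Hi. unfold of_history, hist.
  rewrite nth_indep with (d' := B 0) by (rewrite length_map, length_seq; exact Hi).
  rewrite map_nth, seq_nth; auto.
Qed.

Lemma row_strategy_hist B t :
  row_strategy (S t) (hist B (S t)) =
  option_map (fun x => (x, H)) (choose_column B (S t) (deleted_columns B t)).
Proof.
  simpl. rewrite (deleted_columns_ext _ B t) by (intros; apply of_history_hist; lia).
  unfold choose_column. rewrite of_history_hist by lia. reflexivity.
Qed.

Lemma deleted_columns_mono B s t x :
  s <= t -> In x (deleted_columns B s) -> In x (deleted_columns B t).
Proof.
  induction 1 as [|t _ IH]; [auto|]. intros Hx; simpl.
  destruct (choose_column B (S t) _); [right|]; auto.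
Qed.

Lemma deleted_columns_deleted B t x :
  In x (deleted_columns B t) -> deleted row_strategy B t (x, H).
Proof.
  induction t as [|t IH]; [intros []|]. simpl.
  destruct (choose_column B (S t) (deleted_columns B t)) as [y|] eqn:E.
  - intros [<-|Hx].
    + exists (S t); split; [lia|]. rewrite row_strategy_hist, E; reflexivity.
    + destruct (IH Hx) as [s [Hs Hsig]]; exists s; split; [lia|exact Hsig].
  - intros Hx; destruct (IH Hx) as [s [Hs Hsig]]; exists s; split; [lia|exact Hsig].
Qed.

Lemma deleted_columns_prep B i : i < t1 -> In (nonmultiple g i) (deleted_columns B t1).
Proof.
  intros Hi. apply (deleted_columns_mono B (S i)); [lia|]. simpl.
  unfold choose_column. replace (S i <=? t1) with true by (symmetry; apply Nat.leb_le; lia).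
  rewrite Nat.sub_1_r. left; reflexivity.
Qed.

Lemma deleted_columns_greedy B t : t1 <= t ->
  deleted_columns B (S t) =
  match greedy_column H (B t) (deleted_columns B t) with
  | Some x => x :: deleted_columns B t
  | None => deleted_columns B t
  end.
Proof.
  intros Ht. simpl. unfold choose_column.
  replace (S t <=? t1) with false by (symmetry; apply Nat.leb_gt; lia).
  rewrite Nat.sub_1_r. reflexivity.
Qed.

End RowStrategy.

Definition turn_spread (c : R) (sigma : cstrategy) (B : nat -> V -> Prop) (t : nat)
    (S : list V) : Prop :=
  (INR (length S) <= c * sqrt (INR t))%R /\
  (forall v, B t v <-> B (t - 1) v \/ In v S) /\
  (forall v, In v S -> vert v /\ ~ deleted sigma B t v /\
                       (B (t - 1) v \/ exists u, B (t - 1) u /\ adj u v)).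

Lemma legal_play_turn_spread c B0 sigma B : legal_play c B0 sigma B ->
  exists spread : nat -> list V, forall t, 1 <= t -> turn_spread c sigma B t (spread t).
Proof.
  intros [_ turn].
  exists (fun t => epsilon (inhabits []) (fun S => 1 <= t -> turn_spread c sigma B t S)).
  intros t Ht. apply (epsilon_spec (inhabits []) (fun S => 1 <= t -> turn_spread c sigma B t S));
    [|exact Ht].
  destruct (turn t Ht) as [S HS]. exists S; intros _; exact HS.
Qed.

Section Analysis.
Variables (c : R) (B0 : list V) (h0 n g H t1 : nat).
Hypothesis c_lt : (c < 1 / 6)%R.
Hypothesis B0_vert : forall v, In v B0 -> vert v.
Hypothesis B0_height : forall v, In v B0 -> snd v <= h0.
Hypothesis n_def : n = 3 * h0 + 3.
Hypothesis g_def : g = 4 * n.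
Hypothesis H_def : H = g * n.
Hypothesis t1_def : t1 = H - n.

Section Play.
Variables (B : nat -> V -> Prop) (spread : nat -> list V).
Hypothesis B_init : forall v, B 0 v <-> In v B0.
Hypothesis B_turn : forall t, 1 <= t -> turn_spread c (row_strategy H g t1) B t (spread t).

Lemma occupied_succ t v : B (S t) v <-> B t v \/ In v (spread (S t)).
Proof.
  destruct (B_turn (S t)) as [_ [step _]]; [lia|].
  rewrite step, Nat.sub_succ, Nat.sub_0_r; reflexivity.
Qed.

Lemma spread_spec t v : In v (spread (S t)) ->
  vert v /\ ~ deleted (row_strategy H g t1) B (S t) v /\
  (B t v \/ exists u, B t u /\ adj u v).
Proof.
  destruct (B_turn (S t)) as [_ [_ spec]]; [lia|]. intros Hv.
  specialize (spec v Hv). rewrite Nat.sub_succ, Nat.sub_0_r in spec. exact spec.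
Qed.

Lemma occupied_mono s t v : s <= t -> B s v -> B t v.
Proof. induction 1; [auto|]. intros Bv; apply occupied_succ; left; auto. Qed.

Lemma spread_occupied tau w : 1 <= tau -> In w (spread tau) -> B tau w.
Proof. destruct tau as [|tau]; [lia|]. intros _ Hw; apply occupied_succ; right; exact Hw. Qed.

Lemma occupied_vert_height t v : B t v -> vert v /\ snd v <= h0 + t.
Proof.
  revert v; induction t as [|t IH]; intros v Bv.
  - apply B_init in Bv. split; [exact (B0_vert v Bv)|specialize (B0_height v Bv); lia].
  - apply occupied_succ in Bv as [Bv|Sv]; [destruct (IH v Bv); split; [assumption|lia]|].
    destruct (spread_spec t v Sv) as [vv [_ [Bv|[u [Bu uv]]]]];
      [destruct (IH v Bv); split; [assumption|lia]|].
    destruct (IH u Bu). apply adj_close in uv. split; [assumption|lia].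
Qed.

Lemma occupied_ancestry s m v : B (s + m) v ->
  exists u l, B s u /\ NoDup l /\ snd v <= snd u + length l /\
    forall w, In w l -> (exists tau, s < tau <= s + m /\ In w (spread tau)) /\
                         fst w <= fst v + m /\ fst v <= fst w + m.
Proof.
  revert v; induction m as [|m IH]; intros v Bv.
  - rewrite Nat.add_0_r in Bv. exists v, []; split; [exact Bv|split; [constructor|split]].
    + simpl; lia.
    + intros w [].
  - rewrite Nat.add_succ_r in Bv. destruct (classic (B (s + m) v)) as [Bv'|nBv].
    + destruct (IH v Bv') as [u [l [Bu [nd [vu Hl]]]]].
      exists u, l; split; [exact Bu|split; [exact nd|split; [exact vu|]]].
      intros w Hw; destruct (Hl w Hw) as [[tau [Htau Hwt]] [d1 d2]].
      split; [exists tau; split; [lia|exact Hwt]|lia].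
    + apply occupied_succ in Bv as [|Sv]; [contradiction|].
      destruct (spread_spec _ v Sv) as [_ [_ [|[w [Bw wv]]]]]; [contradiction|].
      destruct (IH w Bw) as [u [l [Bu [nd [wu Hl]]]]]. apply adj_close in wv.
      exists u, (v :: l); split; [exact Bu|split; [|split; [simpl; lia|]]].
      * constructor; [|exact nd]. intros Hv. apply nBv.
        destruct (Hl v Hv) as [[tau [Htau Hvt]] _].
        apply (occupied_mono tau); [lia|apply spread_occupied; [lia|exact Hvt]].
      * intros w' [<-|Hw']; [split; [exists (S (s + m)); split; [lia|exact Sv]|lia]|].
        destruct (Hl w' Hw') as [[tau [Htau Hwt]] [d1 d2]].
        split; [exists tau; split; [lia|exact Hwt]|lia].
Qed.

Lemma spread_length_le tau : 1 <= tau <= H -> length (spread tau) <= h0.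
Proof.
  intros Htau. destruct (B_turn tau) as [len _]; [lia|].
  assert (INR_n : INR n = (3 * INR h0 + 3)%R) by (rewrite n_def, plus_INR, mult_INR; simpl; lra).
  assert (sqrt_le : (sqrt (INR tau) <= 2 * INR n)%R).
  { rewrite <- (sqrt_square (2 * INR n)) by (assert (Hn := pos_INR n); lra).
    apply sqrt_le_1_alt.
    replace (2 * INR n * (2 * INR n))%R with (INR (4 * n * n)) by (rewrite !mult_INR; simpl; lra).
    apply le_INR. nia. }
  assert (sqrt_ge := sqrt_pos (INR tau)). assert (h0_ge := pos_INR h0).
  apply Nat.lt_succ_r, INR_lt. rewrite S_INR.
  destruct (Rle_or_lt c 0); nra.
Qed.

Lemma prep_leaves_multiples x :
  x <= H -> ~ In x (deleted_columns H g t1 B t1) -> x mod g = 0.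
Proof.
  intros xH nd. apply NNPP; intros xm. apply nd.
  rewrite <- (nonmultiple_onto g x) by lia. apply deleted_columns_prep.
  assert (E := Nat.div_mod_eq x g). assert (R := Nat.mod_upper_bound x g ltac:(lia)).
  assert (g * (x / g) < g * n) by lia.
  assert (x / g < n) by nia.
  nia.
Qed.

Definition open_col (t k x : nat) : Prop :=
  open_near H (B t) (deleted_columns H g t1 B t) k x.

Definition below_row (t : nat) : Prop := forall v, B t v -> snd v < H.

Definition hall (t : nat) : Prop := forall k, count_sat (open_col t k) (seq 0 (S H)) <= k.

Definition strip_chain (x : nat) (l : list V) : Prop :=
  NoDup l /\ h0 + 2 <= length l /\
  forall w, In w l -> (exists tau, t1 - (2 * h0 + 2) < tau <= t1 /\ In w (spread tau)) /\
                       x < fst w + 2 * n /\ fst w < x + 2 * n.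

Lemma open_col_strip_chain x : open_col t1 n x -> exists l, strip_chain x l.
Proof.
  intros [_ [_ [f [Bf [fH fx]]]]].
  replace t1 with (t1 - (2 * h0 + 2) + (2 * h0 + 2)) in Bf by nia.
  destruct (occupied_ancestry _ _ f Bf) as [u [l [Bu [nd [fu Hl]]]]].
  exists l; split; [exact nd|split].
  - pose proof (row_dist_ge_depth H f x). destruct (occupied_vert_height _ u Bu). nia.
  - intros w Hw. destruct (Hl w Hw) as [[tau [Htau Hwt]] [d1 d2]].
    apply row_dist_column in fx. split; [exists tau; split; [nia|exact Hwt]|lia].
Qed.

Lemma open_col_prep_end_few : count_sat (open_col t1 n) (seq 0 (S H)) <= 2 * h0.
Proof.
  set (X := filter (holds (open_col t1 n)) (seq 0 (S H))).
  set (chain x := epsilon (inhabits []) (strip_chain x)).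
  assert (chain_spec : forall x, In x X -> strip_chain x (chain x)).
  { intros x Hx. apply In_filter_holds in Hx as [_ Hx].
    apply epsilon_spec, open_col_strip_chain, Hx. }
  assert (X_mult : forall x, In x X -> x mod g = 0).
  { intros x Hx. apply In_filter_holds in Hx as [_ [xH [nd _]]].
    apply prep_leaves_multiples; assumption. }
  assert (nodup : NoDup (flat_map chain X)).
  { apply NoDup_flat_map; [apply NoDup_filter, seq_NoDup|intros x Hx; apply chain_spec, Hx|].
    intros x y w Hx Hy xy Hwx Hwy.
    destruct (chain_spec x Hx) as [_ [_ cx]], (chain_spec y Hy) as [_ [_ cy]].
    destruct (cx w Hwx) as [_ wx], (cy w Hwy) as [_ wy].
    destruct (multiples_apart g x y (X_mult x Hx) (X_mult y Hy) xy); lia. }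
  assert (lower := length_flat_map_ge chain X (h0 + 2)
                     (fun x Hx => proj1 (proj2 (chain_spec x Hx)))).
  set (window := seq (t1 - (2 * h0 + 2) + 1) (2 * h0 + 2)).
  assert (upper : length (flat_map spread window) <= length window * h0).
  { apply length_flat_map_le. intros tau Htau. apply in_seq in Htau.
    apply spread_length_le. nia. }
  assert (incl : incl (flat_map chain X) (flat_map spread window)).
  { intros w Hw. apply in_flat_map in Hw as [x [Hx Hw]].
    destruct (chain_spec x Hx) as [_ [_ cx]]. destruct (cx w Hw) as [[tau [Htau Hwt]] _].
    apply in_flat_map. exists tau; split; [apply in_seq; nia|exact Hwt]. }
  pose proof (NoDup_incl_length nodup incl).
  assert (length window = 2 * h0 + 2) by apply length_seq.
  assert (bound : length X * (h0 + 2) <= (2 * h0 + 2) * h0) by lia.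
  unfold count_sat; fold X. revert bound; generalize (length X); clear; nia.
Qed.

Lemma hall_prep_end : hall t1.
Proof.
  intros k. destruct (le_lt_dec k n) as [kn|nk].
  - destruct (Nat.eq_0_gt_0_cases (count_sat (open_col t1 k) (seq 0 (S H)))) as [->|pos];
      [lia|].
    destruct (count_sat_pos_witness _ _ pos) as [x [_ [_ [_ [u [Bu [uH ux]]]]]]].
    pose proof (row_dist_ge_depth H u x). destruct (occupied_vert_height t1 u Bu) as [_ uh].
    assert (count_sat (open_col t1 k) (seq 0 (S H)) <= count_sat (open_col t1 n) (seq 0 (S H)))
      by (apply count_sat_le_mono; intros y _; apply open_near_mono, kn).
    pose proof open_col_prep_end_few. nia.
  - apply (Nat.le_trans _ (length (map (fun j => g * j) (seq 0 (S n)))));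
      [|rewrite length_map, length_seq; lia].
    apply count_sat_le_incl; [apply seq_NoDup|]. intros x _ [xH [nd _]].
    assert (xm := prep_leaves_multiples x xH nd). assert (E := Nat.div_mod_eq x g).
    apply in_map_iff. exists (x / g); split; [lia|].
    apply in_seq. assert (x / g < S n) by (apply Nat.Div0.div_lt_upper_bound; nia). lia.
Qed.

Lemma near_row_pred t k x :
  below_row t -> near_row H (B (S t)) k x -> near_row H (B t) (S k) x.
Proof.
  intros below [u [Bu [uH ux]]].
  apply occupied_succ in Bu as [Bu|Su]; [exists u; repeat split; auto; lia|].
  destruct (spread_spec t u Su) as [_ [_ [Bu|[w [Bw wu]]]]];
    [exists u; repeat split; auto; lia|].
  pose proof (below w Bw). pose proof (row_dist_adj H w u x wu ltac:(lia) uH).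
  exists w; repeat split; auto; lia.
Qed.

Lemma hall_step t : t1 <= t -> below_row t -> hall t -> hall (S t).
Proof.
  intros Ht below hall_t k.
  destruct (Nat.eq_0_gt_0_cases (count_sat (open_col (S t) k) (seq 0 (S H)))) as [->|pos];
    [lia|].
  destruct (count_sat_pos_witness _ _ pos) as [y [_ [yH [ny near]]]].
  assert (open_y : open_col t (S k) y).
  { split; [exact yH|split; [|apply near_row_pred; assumption]].
    intros Hy; apply ny, (deleted_columns_mono _ _ _ _ t); [lia|exact Hy]. }
  destruct (greedy_column_min _ _ _ _ _ open_y) as [x0 [E open_x0]].
  assert (dels_S : deleted_columns H g t1 B (S t) = x0 :: deleted_columns H g t1 B t)
    by (rewrite deleted_columns_greedy, E by exact Ht; reflexivity).
  assert (count_sat (open_col (S t) k) (seq 0 (S H)) <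
          count_sat (open_col t (S k)) (seq 0 (S H))).
  { apply (count_sat_lt_mono _ _ _ x0).
    - intros z _ [zH [nz nearz]]. rewrite dels_S in nz.
      split; [exact zH|split; [intros Hz; apply nz; right; exact Hz|]].
      apply near_row_pred; assumption.
    - destruct open_x0 as [x0H _]. apply in_seq; lia.
    - exact open_x0.
    - intros [_ [nx0 _]]. apply nx0. rewrite dels_S; left; reflexivity. }
  specialize (hall_t (S k)). lia.
Qed.

(* Hall's condition at level 0 says that no undeleted vertex of row [H] is occupied. *)
Lemma below_row_step t : below_row t -> hall (S t) -> below_row (S t).
Proof.
  intros below hall_St v Bv. apply occupied_succ in Bv as [Bv|Sv]; [auto|].
  destruct (spread_spec t v Sv) as [vv [ndel [Bv|[w [Bw wv]]]]]; [auto|].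
  pose proof (below w Bw). apply adj_close in wv.
  destruct (Nat.eq_dec (snd v) H) as [top|]; [exfalso|lia].
  destruct v as [x y]; unfold vert in vv; simpl in top, vv; subst y.
  assert (open : open_col (S t) 0 x).
  { split; [exact vv|split].
    - intros Hx; apply ndel, deleted_columns_deleted, Hx.
    - exists (x, H); split; [apply occupied_succ; right; exact Sv|].
      unfold row_dist; simpl; lia. }
  pose proof (count_sat_pos _ (seq 0 (S H)) x ltac:(apply in_seq; lia) open).
  specialize (hall_St 0). lia.
Qed.

Lemma below_row_prep t : t <= t1 -> below_row t.
Proof. intros Ht v Bv. destruct (occupied_vert_height t v Bv). nia. Qed.

Lemma below_row_hall t : t1 <= t -> below_row t /\ hall t.
Proof.
  induction 1 as [|t Ht [below hall_t]].
  - split; [apply below_row_prep; lia|exact hall_prep_end].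
  - assert (hall_St : hall (S t)) by (apply hall_step; assumption).
    split; [apply below_row_step|]; assumption.
Qed.

Lemma below_row_always t : below_row t.
Proof. destruct (le_lt_dec t t1); [apply below_row_prep | apply below_row_hall]; lia. Qed.

Lemma row_strategy_moves t v : 1 <= t ->
  row_strategy H g t1 t (hist B t) = Some v -> row H v /\ ~ B (t - 1) v.
Proof.
  destruct t as [|t]; [lia|]. intros _. rewrite row_strategy_hist.
  destruct (choose_column H g t1 B (S t) (deleted_columns H g t1 B t)) as [x|] eqn:E;
    [|discriminate].
  intros [= <-]. rewrite Nat.sub_succ, Nat.sub_0_r. split.
  - split; [reflexivity|cbn [fst]]. unfold choose_column in E.
    destruct (S t <=? t1) eqn:Et; [|exact (greedy_column_le _ _ _ _ E)].
    injection E as <-. rewrite Nat.sub_0_r. apply Nat.leb_le in Et.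
    assert ((g - 1) * n = g * n - n) by (rewrite Nat.mul_sub_distr_r; lia).
    assert (nonmultiple g t < g * n) by (apply nonmultiple_lt; lia). lia.
  - intros Bx. specialize (below_row_always t _ Bx). simpl. lia.
Qed.

Lemma occupation_stabilizes : exists T, forall t, T <= t -> forall v, B t v -> B T v.
Proof.
  destruct (nondecreasing_bounded_stationary (fun t => count_sat (B t) (grid_below H))
              (length (grid_below H))) as [T HT].
  - intros t; apply count_sat_le_mono; intros v _; apply occupied_mono; lia.
  - intros t; apply count_sat_le_length.
  - exists T; intros t Ht v Bv. apply NNPP; intros nBv.
    assert (count_sat (B T) (grid_below H) < count_sat (B t) (grid_below H)).
    { apply (count_sat_lt_mono _ _ _ v); [|apply In_grid_below| |]; auto.
      - intros w _; apply occupied_mono, Ht.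
      - apply (occupied_vert_height t v Bv).
      - apply (below_row_always t v Bv). }
    specialize (HT t Ht); simpl in HT; lia.
Qed.

End Play.

Lemma row_strategy_wins B : legal_play c B0 (row_strategy H g t1) B ->
  (forall t v, 1 <= t -> row_strategy H g t1 t (hist B t) = Some v -> row H v /\ ~ B (t - 1) v) /\
  (exists T, forall t, T <= t -> forall v, B t v -> B T v).
Proof.
  intros play. destruct (legal_play_turn_spread _ _ _ _ play) as [spread turn].
  split; [apply (row_strategy_moves B spread)|apply (occupation_stabilizes B spread)];
    [apply play|exact turn|apply play|exact turn].
Qed.

End Analysis.

Local Close Scope nat_scope.

Theorem proposition5p1 (c : R) (hc : c < 1 / 6) (B0 : list V)
  (hB0 : forall v, In v B0 -> vert v) :
  exists (H : nat) (sigma : cstrategy),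
    forall B : nat -> V -> Prop,
      legal_play c B0 sigma B ->
      (* the strategy only deletes non-occupied vertices of row H *)
      (forall (t : nat) (v : V), (1 <= t)%nat ->
         sigma t (hist B t) = Some v -> row H v /\ ~ B (t - 1)%nat v) /\
      (* Container wins: after some time no new vertices become occupied *)
      (exists T : nat, forall t : nat, (T <= t)%nat ->
         forall v, B t v -> B T v).
Proof.
  set (h0 := list_max (map snd B0)). set (n := (3 * h0 + 3)%nat). set (g := (4 * n)%nat).
  exists (g * n)%nat, (row_strategy (g * n) g (g * n - n)).
  apply (row_strategy_wins c B0 h0 n g); try reflexivity; [exact hc|exact hB0|].
  intros v Hv. assert (all_le := proj1 (list_max_le (map snd B0) h0) (le_n h0)).
  rewrite Forall_forall in all_le. apply all_le, in_map, Hv.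
Qed.
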